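(* Let $\mathcal{H}$ be an infinite-dimensional Hilbert space, $A$ a self-adjoint operator on $\mathcal{H}$, semi-bounded below, with compact resolvent, eigenvalues $\lambda_1\le\lambda_2\le\dots$ (with multiplicity), and $t\notin\mathrm{Spec}(A)$. Let $\mathcal{L}\subset\mathrm{D}(A)$ be a finite-dimensional subspace, $j\in\mathbb{N}$ and $u\in F_j$. Then, for either choice of sign, \[\mathfrak{a}^2_t(u-P^\pm u,u-P^\pm u)\le\sum_{k=1}^j\left(\llbracket\phi_k-P^\pm\phi_k\rrbracket^\pm_t\right)^2.\]
   Context: For $u,v\in\mathrm{D}(A)$: $\mathfrak{a}^1_t(u,v)=\langle (A-t)u,v\rangle$, $\mathfrak{a}^2_t(u,v)=\langle (A-t)u,(A-t)v\rangle$, $|u|_t=\mathfrak{a}^2_t(u,u)^{1/2}$. Let $\mu^-_1(t)=\inf_{u\ne0}\mathfrak{a}^1_t(u,u)/\mathfrak{a}^2_t(u,u)$, $\mu^+_1(t)=\sup_{u\ne0}\mathfrak{a}^1_t(u,u)/\mathfrak{a}^2_t(u,u)$ (over $u\in\mathrm{D}(A)$), $\mathfrak{b}^-_t=\mathfrak{a}^1_t+(1-\mu^-_1(t))\mathfrak{a}^2_t$, $\mathfrak{b}^+_t=-\mathfrak{a}^1_t+(1+\mu^+_1(t))\mathfrak{a}^2_t$, $\llbracket u\rrbracket^\pm_t=\mathfrak{b}^\pm_t(u,u)^{1/2}$. $P^\pm:\mathrm{D}(A)\to\mathcal{L}$ is the orthogonal projection with respect to the inner product $\mathfrak{b}^\pm_t$.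 $\{\phi_k\}_{k\ge1}$ are eigenvectors, $A\phi_k=\lambda_k\phi_k$, orthonormal in $\mathfrak{a}^2_t$; $E_j=\mathrm{Span}\{\phi_1,\dots,\phi_j\}$ and $F_j=\{u\in E_j:|u|_t=1\}$. *)

From HB Require Import structures.
From mathcomp Require Import all_boot all_order all_algebra.
From mathcomp Require Import complex.
From mathcomp Require Import boolp classical_sets reals.

Set Implicit Arguments.
Unset Strict Implicit.
Unset Printing Implicit Defensive.

Import Order.TTheory GRing.Theory Num.Theory.
Local Open Scope ring_scope.
Local Open Scope classical_set_scope.
Local Open Scope complex_scope.

Section Hilbert.
Variable R : realType.
Local Notation C := R[i].
Variable H : lmodType C.
(* inner product, linear in the first argument, antilinear in the second *)
Variable ip : H -> H -> C.

Definition hnorm (u : H) : R := Num.sqrt ((@complex.Re R) (ip u u)).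

Definition hcvg (u : nat -> H) (l : H) : Prop :=
  forall e : R, 0 < e -> exists N : nat, forall n, (N <= n)%N -> hnorm (u n - l) < e.

Definition hcauchy (u : nat -> H) : Prop :=
  forall e : R, 0 < e -> exists N : nat,
    forall m n, (N <= m)%N -> (N <= n)%N -> hnorm (u m - u n) < e.

Definition is_hilbert : Prop :=
  [/\ (forall (a : C) (u v w : H), ip (a *: u + v) w = a * ip u w + ip v w),
      (forall u v : H, ip v u = (ip u v)^*),
      (forall u : H, u != 0 -> 0 < ip u u) &
      (forall u : nat -> H, hcauchy u -> exists l, hcvg u l)].

Definition infinite_dimensional : Prop :=
  forall n : nat, exists e : 'I_n -> H,
    forall i j : 'I_n, ip (e i) (e j) = (i == j)%:R.

Variables (A : H -> H) (D : set H).

Definition is_subspace (S : set H) : Prop :=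
  S 0 /\ forall (a : C) u v, S u -> S v -> S (a *: u + v).

(* A : D(A) -> H is a self-adjoint (densely defined) operator:
   A is linear on D, D is dense, A is symmetric, and D(A^* ) is contained in D(A)
   with A^* = A there. *)
Definition self_adjoint : Prop :=
  [/\ is_subspace D,
      (forall (a : C) u v, D u -> D v -> A (a *: u + v) = a *: A u + A v),
      (forall v e, 0 < e -> exists u, D u /\ hnorm (v - u) < e),
      (forall u v, D u -> D v -> ip (A u) v = ip u (A v)) &
      (forall v w, (forall u, D u -> ip (A u) v = ip u w) -> D v /\ A v = w)].

Definition semibounded_below : Prop :=
  exists c : R, forall u, D u -> c * hnorm u ^+ 2 <= (@complex.Re R) (ip (A u) u).

Definition resolvent_op (z : C) (Rz : H -> H) : Prop :=
  [/\ (forall v, D (Rz v)),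
      (forall v, A (Rz v) - z *: Rz v = v),
      (forall u, D u -> Rz (A u - z *: u) = u) &
      exists K : R, forall v, hnorm (Rz v) <= K * hnorm v].

Definition compact_op (T : H -> H) : Prop :=
  forall v : nat -> H, (exists M : R, forall n, hnorm (v n) <= M) ->
    exists (sigma : nat -> nat) (l : H),
      (forall n, (sigma n < sigma n.+1)%N) /\ hcvg (fun n => T (v (sigma n))) l.

Definition compact_resolvent : Prop :=
  exists z Rz, resolvent_op z Rz /\ compact_op Rz.

Definition not_in_spec (z : C) : Prop := exists Rz, resolvent_op z Rz.

Definition a1 (t : R) (u v : H) : C := ip (A u - t%:C *: u) v.
Definition a2 (t : R) (u v : H) : C := ip (A u - t%:C *: u) (A v - t%:C *: v).
Definition tnorm (t : R) (u : H) : R := Num.sqrt ((@complex.Re R) (a2 t u u)).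

Definition rayleigh_set (t : R) : set R :=
  [set r | exists u, [/\ D u, u <> 0 & r = (@complex.Re R) (a1 t u u) / (@complex.Re R) (a2 t u u)]].

Definition mu1_minus (t : R) : R := inf (rayleigh_set t).
Definition mu1_plus (t : R) : R := sup (rayleigh_set t).

(* sign s = false : the form b^-_t ; s = true : the form b^+_t *)
Definition bform (s : bool) (t : R) (u v : H) : C :=
  if s then - a1 t u v + (1 + mu1_plus t)%:C * a2 t u v
  else a1 t u v + (1 - mu1_minus t)%:C * a2 t u v.

Definition bnorm (s : bool) (t : R) (u : H) : R := Num.sqrt ((@complex.Re R) (bform s t u u)).

Definition is_orth_proj (b : H -> H -> C) (L : set H) (P : H -> H) : Prop :=
  forall u, D u -> L (P u) /\ forall w, L w -> b (u - P u) w = 0.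

Definition finite_dim_subspace (L : set H) : Prop :=
  exists (n : nat) (e : 'I_n -> H),
    forall v, L v <-> exists c : 'I_n -> C, v = \sum_(i < n) c i *: e i.

(* E_j = Span{phi_1, .., phi_j}; phi is indexed from 0, phi k standing for phi_{k+1} *)
Definition in_E (phi : nat -> H) (j : nat) (u : H) : Prop :=
  exists c : 'I_j -> C, u = \sum_(k < j) c k *: phi k.

Definition in_F (t : R) (phi : nat -> H) (j : nat) (u : H) : Prop :=
  in_E phi j u /\ tnorm t u = 1.

Definition eigen_basis (t : R) (lambda : nat -> R) (phi : nat -> H) : Prop :=
  [/\ (forall k, lambda k <= lambda k.+1),
      (forall k, D (phi k) /\ A (phi k) = (lambda k)%:C *: phi k),
      (forall k l, a2 t (phi k) (phi l) = (k == l)%:R) &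
      (forall v e, 0 < e -> exists (n : nat) (c : 'I_n -> C),
          hnorm (v - \sum_(k < n) c k *: phi k) < e)].

End Hilbert.

From HB Require Import structures.
From mathcomp Require Import all_boot all_order all_algebra.
From mathcomp Require Import complex.
From mathcomp Require Import boolp classical_sets reals.
From mathcomp Require Import ring lra.

(* Write u = sum_k c_k phi_k, so that sum_k |c_k|^2 = 1 by a^2_t-orthonormality,
   and put v = sum_k c_k (phi_k - P phi_k).  Since v and u differ by an element
   of L, minimality of the b-orthogonal projection gives b(u - Pu) <= b(v), and
   the Cauchy-Schwarz inequality for the nonnegative hermitian form b bounds
   b(v) by sum_k b(phi_k - P phi_k).  Finally b^-_t and b^+_t dominate a^2_t,
   because mu^-_1(t) a^2_t <= a^1_t <= mu^+_1(t) a^2_t: the Rayleigh quotient is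
   bounded since t lies in the resolvent set. *)

Set Implicit Arguments.
Unset Strict Implicit.
Unset Printing Implicit Defensive.

Import Order.TTheory GRing.Theory Num.Theory.
Local Open Scope ring_scope.
Local Open Scope complex_scope.

(* Without this, [Re] would denote [Num.Theory.Re : C -> C]. *)
Local Notation Re := (@complex.Re _).
Local Notation Im := (@complex.Im _).

Section RealPart.
Variable R : realType.
Implicit Types x y z : R[i].

Lemma ReD x y : Re (x + y) = Re x + Re y.
Proof. by case: x; case: y. Qed.

Lemma ReN x : Re (- x) = - Re x.
Proof. by case: x. Qed.

Lemma Re_sum n (F : 'I_n -> R[i]) : Re (\sum_(k < n) F k) = \sum_(k < n) Re (F k).
Proof. by elim/big_rec2: _ => // k a b _ <-; rewrite ReD. Qed.

Lemma Re_realM (r : R) z : Re (r%:C * z) = r * Re z.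
Proof. by case: z => a b /=; rewrite mul0r subr0. Qed.

Lemma Re_conjc z : Re z^* = Re z.
Proof. by case: z. Qed.

Lemma Re_gt0 z : 0 < z -> 0 < Re z.
Proof. by rewrite ltcE => /andP[]. Qed.

Lemma conjc_realMD (r : R) x y : (x + r%:C * y)^* = x^* + r%:C * y^*.
Proof.
case: x => a b; case: y => c d; apply/eqP; rewrite eq_complex /=.
by apply/andP; split; apply/eqP; ring.
Qed.

Lemma mulcJ z : z * z^* = (Re z ^+ 2 + Im z ^+ 2)%:C.
Proof.
case: z => a b; apply/eqP; rewrite eq_complex /=.
by apply/andP; split; apply/eqP; ring.
Qed.

End RealPart.

Section Subspace.
Variables (R : realType) (H : lmodType R[i]) (S : set H).
Hypothesis subS : is_subspace S.

Lemma subspace0 : S 0.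
Proof. by case: subS. Qed.

Lemma subspaceZ a x : S x -> S (a *: x).
Proof. by case: subS => S0 SZD Sx; rewrite -[_ *: _]addr0; apply: SZD. Qed.

Lemma subspaceD x y : S x -> S y -> S (x + y).
Proof. by case: subS => _ SZD Sx Sy; rewrite -[x]scale1r; apply: SZD. Qed.

Lemma subspaceB x y : S x -> S y -> S (x - y).
Proof. by move=> Sx Sy; rewrite -scaleN1r; apply/subspaceD/subspaceZ. Qed.

Lemma subspace_sum n (c : 'I_n -> R[i]) (g : 'I_n -> H) :
  (forall k, S (g k)) -> S (\sum_(k < n) c k *: g k).
Proof.
move=> Sg; apply: big_ind => [|x y|k _]; first exact: subspace0.
  exact: subspaceD.
exact: subspaceZ.
Qed.

End Subspace.

Lemma subspaceT (R : realType) (H : lmodType R[i]) : is_subspace (@setT H).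
Proof. by []. Qed.

Definition linear_left_on (R : realType) (H : lmodType R[i]) (S : set H)
    (f : H -> H -> R[i]) :=
  forall a x y z, S x -> S y -> S z -> f (a *: x + y) z = a * f x z + f y z.

Definition hermitian_on (R : realType) (H : lmodType R[i]) (S : set H)
    (f : H -> H -> R[i]) :=
  forall x y, S x -> S y -> f y x = (f x y)^*.

Definition nonneg_on (R : realType) (H : lmodType R[i]) (S : set H)
    (f : H -> H -> R[i]) :=
  forall x, S x -> 0 <= Re (f x x).

Section HermitianForm.
Variables (R : realType) (H : lmodType R[i]) (S : set H) (f : H -> H -> R[i]).
Hypotheses (subS : is_subspace S) (f_lin : linear_left_on S f)
  (f_herm : hermitian_on S f).

Lemma form0l z : S z -> f 0 z = 0.
Proof.
move=> Sz; have S0 := subspace0 subS.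
have := f_lin 1 S0 S0 Sz; rewrite scaler0 addr0 mul1r => E.
by apply: (addrI (f 0 z)); rewrite addr0 -E.
Qed.

Lemma formZl a x z : S x -> S z -> f (a *: x) z = a * f x z.
Proof.
move=> Sx Sz; have := f_lin a Sx (subspace0 subS) Sz.
by rewrite addr0 form0l // addr0.
Qed.

Lemma formDl x y z : S x -> S y -> S z -> f (x + y) z = f x z + f y z.
Proof. by move=> Sx Sy Sz; rewrite -{1}[x]scale1r f_lin // mul1r. Qed.

Lemma formBl x y z : S x -> S y -> S z -> f (x - y) z = f x z - f y z.
Proof.
move=> Sx Sy Sz; rewrite -scaleN1r formDl ?formZl ?mulN1r //.
exact: subspaceZ.
Qed.

Lemma formZr a x z : S x -> S z -> f z (a *: x) = a^* * f z x.
Proof.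
move=> Sx Sz; have Sax := subspaceZ subS a Sx.
by rewrite f_herm // formZl // rmorphM /= -f_herm.
Qed.

Lemma formDr x y z : S x -> S y -> S z -> f z (x + y) = f z x + f z y.
Proof.
move=> Sx Sy Sz; have Sxy := subspaceD subS Sx Sy.
by rewrite f_herm // formDl // rmorphD /= -!f_herm.
Qed.

Lemma formBr x y z : S x -> S y -> S z -> f z (x - y) = f z x - f z y.
Proof.
move=> Sx Sy Sz; have Sxy := subspaceB subS Sx Sy.
by rewrite f_herm // formBl // rmorphB /= -!f_herm.
Qed.

Lemma form_comb2 a b x y : S x -> S y ->
  f (a *: x + b *: y) (a *: x + b *: y) =
  a * a^* * f x x + a * b^* * f x y + b * a^* * f y x + b * b^* * f y y.
Proof.
move=> Sx Sy; have Sax := subspaceZ subS a Sx; have Sby := subspaceZ subS b Sy.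
have Sw := subspaceD subS Sax Sby.
rewrite formDl // !formZl // !formDr // !formZr //; ring.
Qed.

Lemma form_suml n (c : 'I_n -> R[i]) g z : (forall k, S (g k)) -> S z ->
  f (\sum_(k < n) c k *: g k) z = \sum_(k < n) c k * f (g k) z.
Proof.
move=> Sg Sz; suff [] : S (\sum_(k < n) c k *: g k) /\
    f (\sum_(k < n) c k *: g k) z = \sum_(k < n) c k * f (g k) z by [].
apply: (big_ind2 (fun w y => S w /\ f w z = y)).
- by split; [exact: subspace0 | exact: form0l].
- move=> w1 y1 w2 y2 [Sw1 <-] [Sw2 <-].
  by rewrite formDl //; split => //; exact: subspaceD.
- by move=> k _; rewrite formZl //; split => //; exact: subspaceZ.
Qed.

Lemma form_sumr n (c : 'I_n -> R[i]) g z : (forall k, S (g k)) -> S z ->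
  f z (\sum_(k < n) c k *: g k) = \sum_(k < n) (c k)^* * f z (g k).
Proof.
move=> Sg Sz; have Ssum := subspace_sum subS c Sg.
rewrite f_herm // form_suml // rmorph_sum.
by apply: eq_bigr => k _; rewrite rmorphM /= -f_herm.
Qed.

Lemma form_sum2 n (c : 'I_n -> R[i]) g : (forall k, S (g k)) ->
  f (\sum_(k < n) c k *: g k) (\sum_(k < n) c k *: g k) =
  \sum_(k < n) \sum_(l < n) c k * (c l)^* * f (g k) (g l).
Proof.
move=> Sg; rewrite form_suml //; last exact: subspace_sum.
apply: eq_bigr => k _; rewrite form_sumr // mulr_sumr.
by apply: eq_bigr => l _; rewrite mulrA.
Qed.

Lemma form_sum_orthonormal n (c : 'I_n -> R[i]) g : (forall k, S (g k)) ->
  (forall k l, f (g k) (g l) = (k == l)%:R) ->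
  f (\sum_(k < n) c k *: g k) (\sum_(k < n) c k *: g k) =
  (\sum_(k < n) (Re (c k) ^+ 2 + Im (c k) ^+ 2))%:C.
Proof.
move=> Sg g_orth; rewrite form_sum2 // rmorph_sum; apply: eq_bigr => k _.
rewrite (bigD1 k) //= big1 => [|l lk].
  by rewrite g_orth eqxx mulr1 addr0 mulcJ.
by rewrite g_orth eq_sym (negbTE lk) mulr0.
Qed.

Lemma form_pythagoras x y : S x -> S y -> f x y = 0 ->
  f (x - y) (x - y) = f x x + f y y.
Proof.
move=> Sx Sy fxy0; have Sxy := subspaceB subS Sx Sy.
rewrite formBl // !formBr // (f_herm Sx Sy) fxy0 rmorph0; ring.
Qed.

Hypothesis f_ge0 : nonneg_on S f.

Lemma orth_proj_min (L : set H) (P : H -> H) u x :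
  is_subspace L -> (forall v, L v -> S v) -> is_orth_proj S f L P ->
  S u -> L x -> Re (f (u - P u) (u - P u)) <= Re (f (u - x) (u - x)).
Proof.
move=> subL LS hP Su Lx; have [LPu Pu_orth] := hP u Su.
have Se : S (u - P u) by apply: subspaceB => //; exact: LS.
have Ly : L (x - P u) := subspaceB subL Lx LPu.
have -> : u - x = (u - P u) - (x - P u) by rewrite opprB addrA subrK.
have Sy : S (x - P u) by exact: LS.
by rewrite (form_pythagoras Se Sy (Pu_orth _ Ly)) ReD lerDl f_ge0.
Qed.

Lemma normr_Re_form_le x y : S x -> S y ->
  2 * `|Re (f x y)| <= Re (f x x) + Re (f y y).
Proof.
move=> Sx Sy; have Sxy := subspaceD subS Sx Sy; have Sxy' := subspaceB subS Sx Sy.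
have := f_ge0 Sxy; have := f_ge0 Sxy'.
rewrite formBl // !formBr // formDl // !formDr // (f_herm Sx Sy).
rewrite !(ReD, ReN) Re_conjc.
have [r_ge0 | r_lt0] := lerP 0 (Re (f x y)).
  by rewrite ger0_norm //; lra.
by rewrite ltr0_norm //; lra.
Qed.

(* Summing the nonnegative numbers f(w_kl, w_kl) for
   w_kl = conj(c_k) g_l - conj(c_l) g_k gives Lagrange's identity
   2 (sum |c_k|^2)(sum f(g_k, g_k)) - 2 f(v, v) >= 0. *)
Lemma form_sum_le n (c : 'I_n -> R[i]) g : (forall k, S (g k)) ->
  Re (f (\sum_(k < n) c k *: g k) (\sum_(k < n) c k *: g k)) <=
  (\sum_(k < n) (Re (c k) ^+ 2 + Im (c k) ^+ 2)) *
  \sum_(k < n) Re (f (g k) (g k)).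
Proof.
move=> Sg; set v := \sum_(k < n) c k *: g k.
set N := \sum_(k < n) _; set G := \sum_(k < n) f (g k) (g k).
pose w k l := (c k)^* *: g l + (- (c l)^*) *: g k.
have Sw k l : S (w k l) by apply: (subspaceD subS); apply: (subspaceZ subS).
have lagrange : \sum_(k < n) \sum_(l < n) f (w k l) (w k l) =
    (N *+ 2)%:C * G - f v v *+ 2.
  have -> : f v v *+ 2 = \sum_(k < n) \sum_(l < n)
      (c k * (c l)^* * f (g k) (g l) + c l * (c k)^* * f (g l) (g k)).
    rewrite mulr2n /v form_sum2 //.
    rewrite [in RHS](eq_bigr _ (fun k _ => big_split _ _ _ _ _)) big_split /=.
    by congr (_ + _); apply: exchange_big.
  have -> : (N *+ 2)%:C * G = \sum_(k < n) \sum_(l < n)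
      (c k * (c k)^* * f (g l) (g l) + c l * (c l)^* * f (g k) (g k)).
    rewrite [in RHS](eq_bigr _ (fun k _ => big_split _ _ _ _ _)) big_split /=.
    rewrite [X in _ = _ + X]exchange_big -mulr2n rmorphMn /= mulrnAl.
    congr (_ *+ 2); rewrite rmorph_sum mulr_suml; apply: eq_bigr => k _.
    by rewrite /G mulr_sumr; apply: eq_bigr => l _; rewrite mulcJ.
  rewrite -sumrB; apply: eq_bigr => k _; rewrite -sumrB; apply: eq_bigr => l _.
  rewrite /w form_comb2 // !rmorphN /= !conjCK; ring.
have : 0 <= Re (\sum_(k < n) \sum_(l < n) f (w k l) (w k l)).
  rewrite Re_sum; apply: sumr_ge0 => k _.
  by rewrite Re_sum; apply: sumr_ge0 => l _; apply: f_ge0.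
rewrite lagrange ReD ReN Re_realM Re_sum -/v; lra.
Qed.

End HermitianForm.

Section QuadraticForms.
Variables (R : realType) (H : lmodType R[i]) (ip : H -> H -> R[i]).
Variables (A : H -> H) (D : set H) (t : R).
Hypotheses (ip_hilbert : is_hilbert ip) (A_sa : self_adjoint ip A D).

Lemma subspace_dom : is_subspace D.
Proof. by case: A_sa. Qed.

Lemma ip_linear_left : linear_left_on setT ip.
Proof. by case: ip_hilbert => ip_lin _ _ _ a x y z _ _ _; apply: ip_lin. Qed.

Lemma ip_hermitian : hermitian_on setT ip.
Proof. by case: ip_hilbert => _ ip_herm _ _ x y _ _; apply: ip_herm. Qed.

Lemma ip_ge0 : nonneg_on setT ip.
Proof.
move=> x _; have [-> | x0] := eqVneq x 0.
  by rewrite (form0l (subspaceT H) ip_linear_left).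
by case: ip_hilbert => _ _ ip_pos _; apply/ltW/Re_gt0/ip_pos.
Qed.

Lemma op0 : A 0 = 0.
Proof.
case: A_sa => [[D0 _] A_lin _ _ _]; have := A_lin 1 0 0 D0 D0.
rewrite scaler0 addr0 scale1r => E.
by apply: (addrI (A 0)); rewrite addr0 -E.
Qed.

Lemma shift_linear a x y : D x -> D y ->
  A (a *: x + y) - t%:C *: (a *: x + y) =
  a *: (A x - t%:C *: x) + (A y - t%:C *: y).
Proof.
case: A_sa => _ A_lin _ _ _ Dx Dy.
rewrite A_lin // !scalerDr !scalerN !scalerA [t%:C * a]mulrC.
by rewrite opprD addrACA.
Qed.

Lemma a1_linear_left : linear_left_on D (a1 ip A t).
Proof.
by move=> a x y z Dx Dy Dz; rewrite /a1 shift_linear // ip_linear_left.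
Qed.

Lemma a2_linear_left : linear_left_on D (a2 ip A t).
Proof.
by move=> a x y z Dx Dy Dz; rewrite /a2 shift_linear // ip_linear_left.
Qed.

Lemma a1_hermitian : hermitian_on D (a1 ip A t).
Proof.
case: A_sa => _ _ _ A_sym _ x y Dx Dy.
rewrite /a1 !(formBl (subspaceT H) ip_linear_left) //.
rewrite !(formZl (subspaceT H) ip_linear_left) // A_sym //.
by rewrite rmorphB rmorphM /= oppr0 -!ip_hermitian.
Qed.

Lemma a2_hermitian : hermitian_on D (a2 ip A t).
Proof. by move=> x y _ _; rewrite /a2 ip_hermitian. Qed.

Lemma tnorm_orthonormal_sum n (c : 'I_n -> R[i]) g : (forall k, D (g k)) ->
  (forall k l, a2 ip A t (g k) (g l) = (k == l)%:R) ->
  tnorm ip A t (\sum_(k < n) c k *: g k) ^+ 2 =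
  \sum_(k < n) (Re (c k) ^+ 2 + Im (c k) ^+ 2).
Proof.
move=> Dg g_orth; rewrite /tnorm.
rewrite (form_sum_orthonormal subspace_dom a2_linear_left a2_hermitian) //=.
by rewrite sqr_sqrtr // sumr_ge0 // => k _; rewrite addr_ge0 ?sqr_ge0.
Qed.

Lemma a2_ge0 : nonneg_on D (a2 ip A t).
Proof. by move=> x _; apply: ip_ge0. Qed.

Lemma bform_linear_left s : linear_left_on D (bform ip A D s t).
Proof.
move=> a x y z Dx Dy Dz.
by rewrite /bform a1_linear_left // a2_linear_left //; case: s; ring.
Qed.

Lemma bform_hermitian s : hermitian_on D (bform ip A D s t).
Proof.
move=> x y Dx Dy; rewrite /bform a1_hermitian // a2_hermitian //.
by case: s; rewrite conjc_realMD ?rmorphN.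
Qed.

Hypothesis t_resolvent : not_in_spec ip A D t%:C.

Lemma a2_gt0 w : D w -> w != 0 -> 0 < Re (a2 ip A t w w).
Proof.
move=> Dw; have [Rt [_ _ Rt_inv _]] := t_resolvent.
have Rt0 : Rt 0 = 0.
  by have := Rt_inv _ (subspace0 subspace_dom); rewrite op0 scaler0 subr0.
case: ip_hilbert => _ _ ip_pos _ w0; apply/Re_gt0/ip_pos.
apply: contra w0 => /eqP Tw0.
by rewrite -(Rt_inv _ Dw) Tw0 Rt0.
Qed.

(* The resolvent bound |w| <= K |(A - t) w| lets a^2_t(w) = |(A - t) w|^2
   control |w|^2, hence also a^1_t(w) = <(A - t) w, w>. *)
Lemma a1_bounded :
  exists M : R, forall w, D w -> `|Re (a1 ip A t w w)| <= M * Re (a2 ip A t w w).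
Proof.
have [Rt [_ _ Rt_inv [K Rt_bound]]] := t_resolvent.
exists (1 + K ^+ 2) => w Dw; rewrite /a1 /a2; set v := A w - t%:C *: w.
have ip_bound : Re (ip w w) <= K ^+ 2 * Re (ip v v).
  have := Rt_bound v; rewrite /v Rt_inv // -/v /hnorm => le_sqrt.
  have := sqrtr_ge0 (Re (ip w w)) => sqrt_ge0.
  rewrite -(sqr_sqrtr (ip_ge0 I)) -(sqr_sqrtr (ip_ge0 (x := v) I)) -exprMn.
  by rewrite ler_sqr ?nnegrE // (le_trans sqrt_ge0).
have := normr_Re_form_le (subspaceT H) ip_linear_left ip_hermitian ip_ge0
  (x := v) (y := w) I I.
have := ip_ge0 (x := v) I; have := normr_ge0 (Re (ip v w)).
have : 0 <= K ^+ 2 * Re (ip v v) by rewrite mulr_ge0 ?sqr_ge0 ?ip_ge0.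
lra.
Qed.

Lemma a1_mu1_bounds w : D w ->
  mu1_minus ip A D t * Re (a2 ip A t w w) <= Re (a1 ip A t w w)
    <= mu1_plus ip A D t * Re (a2 ip A t w w).
Proof.
move=> Dw; have [M a1M] := a1_bounded.
have [-> | w0] := eqVneq w 0.
  have D0 := subspace0 subspace_dom.
  rewrite (form0l subspace_dom a1_linear_left) //.
  by rewrite (form0l subspace_dom a2_linear_left) // !mulr0 lexx.
have rayleigh_bounded r : rayleigh_set ip A D t r -> - M <= r <= M.
  move=> [v [Dv /eqP v0 ->]]; have a2v := a2_gt0 Dv v0.
  by rewrite ler_pdivlMr // ler_pdivrMr // mulNr -ler_norml a1M.
have lb : has_lbound (rayleigh_set ip A D t).
  by exists (- M) => r /rayleigh_bounded /andP[].
have ub : has_ubound (rayleigh_set ip A D t).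
  by exists M => r /rayleigh_bounded /andP[].
have a2w := a2_gt0 Dw w0.
have quot_in : rayleigh_set ip A D t (Re (a1 ip A t w w) / Re (a2 ip A t w w)).
  by exists w; split => //; apply/eqP.
rewrite -(ler_pdivlMr _ _ a2w) -(ler_pdivrMr _ _ a2w).
by rewrite (ge_inf lb quot_in) (ub_le_sup ub quot_in).
Qed.

Lemma a2_le_bform s w : D w -> Re (a2 ip A t w w) <= Re (bform ip A D s t w w).
Proof.
move=> Dw; have /andP[lo hi] := a1_mu1_bounds Dw.
by rewrite /bform; case: s; rewrite ReD ?ReN Re_realM; lra.
Qed.

Lemma bform_ge0 s : nonneg_on D (bform ip A D s t).
Proof. by move=> w Dw; apply: le_trans (a2_le_bform s Dw); apply: a2_ge0. Qed.

End QuadraticForms.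

Theorem lemma4p3 (R : realType) (H : lmodType R[i]) (ip : H -> H -> R[i])
  (A : H -> H) (D : set H) (t : R) (lambda : nat -> R) (phi : nat -> H)
  (L : set H) (j : nat) (u : H) (s : bool) (P : H -> H) :
  is_hilbert ip -> infinite_dimensional ip ->
  self_adjoint ip A D -> semibounded_below ip A D -> compact_resolvent ip A D ->
  not_in_spec ip A D t%:C ->
  eigen_basis ip A D t lambda phi ->
  (forall v, L v -> D v) -> is_subspace L -> finite_dim_subspace L ->
  in_F ip A t phi j u ->
  is_orth_proj D (bform ip A D s t) L P ->
  (@complex.Re R) (a2 ip A t (u - P u) (u - P u))
    <= \sum_(k < j) (bnorm ip A D s t (phi k - P (phi k))) ^+ 2.
Proof.
move=> hH _ hA _ _ t_res [_ phi_eig phi_orth _] LD subL _ [[c u_def] u_unit] hP.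
have subD := subspace_dom hA.
have Dphi k : D (phi k) by case: (phi_eig k).
have b_lin := bform_linear_left t hH hA s.
have b_herm := bform_hermitian t hH hA s.
have b_ge0 := bform_ge0 hH hA t_res s.
have Du : D u by rewrite u_def; apply: subspace_sum.
have Dpsi k : D (phi k - P (phi k)).
  by apply: (subspaceB subD) => //; apply/LD/(hP _ (Dphi k)).1.
have coef_unit : \sum_(k < j) (Re (c k) ^+ 2 + Im (c k) ^+ 2) = 1.
  have := tnorm_orthonormal_sum hH hA c (fun k => Dphi k) (fun k l => phi_orth k l).
  by rewrite -u_def u_unit expr1n.
pose x := \sum_(k < j) c k *: P (phi k).
have Lx : L x by apply: (subspace_sum subL) => k; exact: (hP _ (Dphi k)).1.
have v_def : \sum_(k < j) c k *: (phi k - P (phi k)) = u - x.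
  by rewrite u_def -sumrB; apply: eq_bigr => k _; rewrite scalerBr.
have De : D (u - P u) by apply: (subspaceB subD) => //; apply/LD/(hP _ Du).1.
apply: le_trans (a2_le_bform hH hA t_res s De) _.
apply: le_trans (orth_proj_min subD b_lin b_herm b_ge0 subL LD hP Du Lx) _.
rewrite -v_def.
apply: le_trans (form_sum_le subD b_lin b_herm b_ge0 c (fun k => Dpsi k)) _.
rewrite coef_unit mul1r; apply: ler_sum => k _.
by rewrite /bnorm sqr_sqrtr // b_ge0.
Qed.
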